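(* Let $M$ be a totally ordered finite monoid and $a,b,c\in M$ with $b\le_J a$. If $abc=ab$ then $bc=b$. Similarly, if $cba=ba$ then $cb=b$.
   Context: For $m$ in a monoid $M$, $J(m)=\{xmy:x,y\in M\}$. Write $a\le_J b$ iff $J(a)\subseteq J(b)$. A monoid $M$ is totally ordered if for all $a,b\in M$, $J(ab)=J(a)$ or $J(ab)=J(b)$. *)

From HB Require Import structures.
From mathcomp Require Import all_boot.
Set Implicit Arguments. Unset Strict Implicit. Unset Printing Implicit Defensive.
Local Open Scope group_scope.

Definition Jideal (M : monoidType) (m : M) : M -> Prop :=
  fun z => exists x y : M, z = x * m * y.

Definition leJ (M : monoidType) (a b : M) : Prop :=
  forall z, Jideal a z -> Jideal b z.

Definition Jeq (M : monoidType) (u v : M) : Prop :=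
  forall z, Jideal u z <-> Jideal v z.

Definition totally_ordered (M : monoidType) : Prop :=
  forall a b : M, Jeq (a * b) a \/ Jeq (a * b) b.

Definition finite_monoid (M : monoidType) : Prop :=
  exists s : seq M, forall x : M, x \in s.

From HB Require Import structures.
From mathcomp Require Import all_boot.
Set Implicit Arguments.
Unset Strict Implicit.
Unset Printing Implicit Defensive.
Local Open Scope group_scope.

(* Totality and b <=_J a give J(ab) = J(ba) = J(b).  In a finite monoid a
   J-equivalence y = p (x y) q upgrades to y = t x y: iterating the sandwich,
   y = (p x)^n y q^n, and choosing n with q^n idempotent kills the right factor.
   Then b c = t a b c = t a b = b, and dually on the other side. *)

Section FiniteMonoid.
Variable M : monoidType.
Hypothesis finM : finite_monoid M.

Lemma exists_expg_eq (z : M) : exists i j, (i < j)%N /\ z ^+ i = z ^+ j.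
Proof.
case: finM => s mem_s.
set pows := [seq z ^+ n | n <- iota 0 (size s).+1].
have : ~~ uniq pows.
  apply/negP => uniq_pows.
  have := uniq_leq_size uniq_pows (fun x _ => mem_s x).
  by rewrite /pows size_map size_iota ltnn.
case/(uniqPn 1) => i [j [lt_ij]].
rewrite /pows size_map size_iota => lt_j.
rewrite !(nth_map 0%N) ?size_iota ?(ltn_trans lt_ij) //.
by rewrite !nth_iota ?(ltn_trans lt_ij) // !add0n => eq_ij; exists i, j.
Qed.

Lemma expg_idempotent (z : M) :
  exists N, (0 < N)%N /\ z ^+ N * z ^+ N = z ^+ N.
Proof.
have [i [j [lt_ij eq_ij]]] := exists_expg_eq z.
set d := (j - i)%N.
have periodic m k : (i <= m)%N -> z ^+ (m + d * k) = z ^+ m.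
  move=> le_im; elim: k => [|k IHk]; first by rewrite muln0 addn0.
  rewrite mulnS addnCA expgnDr IHk -expgnDr addnC -(subnK le_im) -addnA.
  by rewrite [(i + d)%N]subnKC ?(ltnW lt_ij) // expgnDr -eq_ij -expgnDr.
exists (d * i.+1)%N; split; first by rewrite muln_gt0 subn_gt0 lt_ij.
by rewrite -expgnDr periodic // (leq_trans (leqnSn i)) // leq_pmull // subn_gt0.
Qed.

Lemma sandwich_expg (u y v : M) (n : nat) :
  y = u * y * v -> y = u ^+ n * y * v ^+ n.
Proof.
move=> eq_y; elim: n => [|n IHn]; first by rewrite !expg0 mul1g mulg1.
by rewrite {1}IHn {1}eq_y expgSr expgS !mulgA.
Qed.

Lemma sandwich_fixed (u y v : M) :
  y = u * y * v -> exists N, [/\ (0 < N)%N, y = u ^+ N * y & y = y * v ^+ N].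
Proof.
move=> eq_y; have [N [N_gt0 idem_v]] := expg_idempotent v.
have eq_yN := sandwich_expg N eq_y.
have yvN : y = y * v ^+ N by rewrite {1 2}eq_yN -!mulgA idem_v.
by exists N; split; rewrite // {1}eq_yN -mulgA -yvN.
Qed.

Lemma Jideal_mull_stable (x y : M) :
  Jideal (x * y) y -> exists t, y = t * x * y.
Proof.
case=> p [q eq_y]; rewrite mulgA in eq_y.
have [[|N] [] // _ eq_yN _] := sandwich_fixed eq_y.
by exists ((p * x) ^+ N * p); rewrite {1}eq_yN expgSr !mulgA.
Qed.

Lemma Jideal_mulr_stable (x y : M) :
  Jideal (y * x) y -> exists t, y = y * x * t.
Proof.
case=> p [q eq_y]; rewrite -!mulgA mulgA in eq_y.
have [[|N] [] // _ _ eq_yN] := sandwich_fixed eq_y.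
by exists (q * (x * q) ^+ N); rewrite {1}eq_yN expgS !mulgA.
Qed.

End FiniteMonoid.

Lemma Jideal_refl (M : monoidType) (b : M) : Jideal b b.
Proof. by exists 1, 1; rewrite mul1g mulg1. Qed.

Lemma Jideal_mul (M : monoidType) (x y b : M) : totally_ordered M ->
  Jideal x b -> Jideal y b -> Jideal (x * y) b.
Proof. by move=> totM Jxb Jyb; case: (totM x y) => eqJ; apply/eqJ. Qed.

Theorem lemma4p2 (M : monoidType) (HF : finite_monoid M)
  (HT : totally_ordered M) (a b c : M) (hba : leJ b a) :
  (a * b * c = a * b -> b * c = b) /\ (c * b * a = b * a -> c * b = b).
Proof.
have Jab : Jideal a b by apply/hba/Jideal_refl.
split=> eq_abc.
- have [t eq_b] := Jideal_mull_stable HF (Jideal_mul HT Jab (Jideal_refl b)).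
  by rewrite {1}eq_b -!mulgA [a * (b * c)]mulgA eq_abc mulgA -eq_b.
- have [t eq_b] := Jideal_mulr_stable HF (Jideal_mul HT (Jideal_refl b) Jab).
  by rewrite eq_b !mulgA eq_abc -eq_b.
Qed.
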